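(* Let $M\ge0$. There is no infinite antichain $S_1,S_2,\dots$ in $(\mathrm{RL},\le_{RL})$, with $S_i$ of type $(d_i,n_i)$, for which the sequence $(n_i)_i$ is bounded.
   Context: Fix an integer $M\ge0$. A reading list of type $(d,n)$ is a tuple $S=(S^1,\dots,S^n)$ of $d$-element subsets of $[Md]=\{1,\dots,Md\}$ (each $S^i$ viewed as an increasing word). $\mathrm{RL}$ denotes the set of all reading lists of all types. For $S=(S^1,\dots,S^n)$ of type $(d,n)$ and $T=(T^1,\dots,T^m)$ of type $(e,m)$, define $S\le_{RL}T$ iff there exist indices $1\le k_1<k_2<\cdots<k_n\le m$ and maps $f_i:S^i\to T^{k_i}$ ($i=1,\dots,n$), each strictly increasing, such that $f_i(x)=f_j(x)$ for all $i,j$ and all $x\in S^i\cap S^j$. An antichain is a sequence of pairwise incomparable elements. *)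

From mathcomp Require Import all_boot.
Set Implicit Arguments. Unset Strict Implicit. Unset Printing Implicit Defensive.

(* A reading list of type (d, n): the parameter d together with the list
   S = (S^1, ..., S^n) of its words; each S^i is a d-element subset of
   [M d] = {1, ..., M d}, represented as its increasing word (a strictly
   increasing list of naturals). *)
Record readingList := RL { rl_d : nat; rl_sets : seq (seq nat) }.

Definition rl_n (S : readingList) : nat := size (rl_sets S).

Definition is_subset_word (M d : nat) (s : seq nat) : bool :=
  [&& sorted ltn s, size s == d & all (fun x => (0 < x) && (x <= M * d)) s].

Definition valid_RL (M : nat) (S : readingList) : bool :=
  all (is_subset_word M (rl_d S)) (rl_sets S).

(* S <=_RL T.  Indices are 0-based: k_0 < ... < k_{n-1} < m.
   The maps f_i : S^i -> T^{k_i} are given as f i : nat -> nat, only their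
   values on S^i matter. *)
Definition rl_le (S T : readingList) : Prop :=
  let n := rl_n S in let m := rl_n T in
  exists (k : nat -> nat) (f : nat -> nat -> nat),
    (forall i, i < n -> k i < m) /\
    (forall i j, i < j < n -> k i < k j) /\
    (forall i x, i < n -> x \in nth [::] (rl_sets S) i ->
        f i x \in nth [::] (rl_sets T) (k i)) /\
    (forall i x y, i < n -> x \in nth [::] (rl_sets S) i ->
        y \in nth [::] (rl_sets S) i -> x < y -> f i x < f i y) /\
    (forall i j x, i < n -> j < n ->
        x \in nth [::] (rl_sets S) i -> x \in nth [::] (rl_sets S) j ->
        f i x = f j x).

Definition rl_antichain (M : nat) (S : nat -> readingList) : Prop :=
  (forall i, valid_RL M (S i)) /\
  (forall i j, i <> j -> ~ rl_le (S i) (S j)).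

From Stdlib Require Import Classical ClassicalEpsilon.
From mathcomp Require Import all_boot.

Set Implicit Arguments. Unset Strict Implicit. Unset Printing Implicit Defensive.

(* A reading list S with at most B words is encoded as a word over the finite
   alphabet ['I_B.+1 + {ffun 'I_B -> bool}]: a first letter recording n, then,
   for each x occurring in S (in increasing order), the column telling which
   words S^i contain x.  By Higman's lemma any infinite sequence of such words
   has i < j with code S_i a subsequence of code S_j; the subsequence
   embedding restricts to strictly increasing maps S^k -> T^k that agree on
   common letters, so S_i <=_RL S_j. *)

Lemma classical_ex_min (P : nat -> Prop) :
  (exists n, P n) -> exists2 n, P n & forall m, P m -> n <= m.
Proof.
move=> [n Pn]; elim: n {-2}n (leqnn n) Pn => [|k IHk] n le_nk Pn.
  by exists n => // m _; move: le_nk; rewrite leqn0 => /eqP->.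
have [[m [lt_mn Pm]] | no_smaller] := classic (exists m, m < n /\ P m).
  by apply: (IHk m) => //; rewrite -ltnS (leq_trans lt_mn).
exists n => // m Pm; rewrite leqNgt; apply/negP => lt_mn.
by apply: no_smaller; exists m.
Qed.

Lemma finite_colouring_monochromatic (T : finType) (c : nat -> T) :
  exists a (phi : nat -> nat), {homo phi : m n / m < n} /\ forall j, c (phi j) = a.
Proof.
have [a inf_a] : exists a, forall N, exists k, (N <= k) && (c k == a).
  apply: NNPP => no_inf.
  have {}no_inf a : exists N, forall k, N <= k -> c k != a.
    apply: NNPP => H; apply: no_inf; exists a => N.
    apply: NNPP => H'; apply: H; exists N => k le_Nk.
    by apply/negP => /eqP ck; apply: H'; exists k; rewrite le_Nk ck eqxx.
  have [N bound] := fin_all_exists no_inf.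
  pose K := \max_a N a.
  by move: (bound (c K) K (leq_bigmax (c K))); rewrite eqxx.
pose next N := xchoose (inf_a N).
have next_spec N : (N <= next N) && (c (next N) == a) := xchooseP (inf_a N).
pose phi j := iter j (fun k => next k.+1) (next 0).
exists a, phi; split.
  apply: homo_ltn => [? ? ? /ltn_trans|j]; first exact.
  by case/andP: (next_spec (phi j).+1).
move=> [|j]; apply/eqP; first by case/andP: (next_spec 0).
by case/andP: (next_spec (phi j).+1).
Qed.

Section Higman.

Variable T : eqType.

Definition bad (f : nat -> seq T) := forall i j, i < j -> ~~ subseq (f i) (f j).

Definition bad_extension (p : seq (seq T)) :=
  exists2 f, bad f & forall i, i < size p -> f i = nth [::] p i.

Definition shortest_bad_continuation (p : seq (seq T)) (w : seq T) :=
  bad_extension (rcons p w) /\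
  forall w', bad_extension (rcons p w') -> size w <= size w'.

Definition next_min_bad (p : seq (seq T)) : seq T :=
  epsilon (inhabits [::]) (shortest_bad_continuation p).

Lemma next_min_badP p :
  bad_extension p -> shortest_bad_continuation p (next_min_bad p).
Proof.
move=> [f bad_f f_p]; apply: epsilon_spec.
have [|n [w [<- ext_w]] min_n] :=
  @classical_ex_min (fun n => exists w, size w = n /\ bad_extension (rcons p w)).
  exists (size (f (size p))), (f (size p)); split=> //; exists f => // i.
  rewrite size_rcons ltnS leq_eqVlt nth_rcons => /orP[/eqP->|lt_ip].
    by rewrite ltnn eqxx.
  by rewrite lt_ip f_p.
by exists w; split=> // w' ext_w'; apply: min_n; exists w'.
Qed.

Fixpoint min_bad_prefix (k : nat) : seq (seq T) :=
  if k is k'.+1 then rcons (min_bad_prefix k') (next_min_bad (min_bad_prefix k'))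
  else [::].

Definition min_bad (k : nat) : seq T := next_min_bad (min_bad_prefix k).

Lemma size_min_bad_prefix k : size (min_bad_prefix k) = k.
Proof. by elim: k => //= k IHk; rewrite size_rcons IHk. Qed.

Lemma nth_min_bad_prefix k i : i < k -> nth [::] (min_bad_prefix k) i = min_bad i.
Proof.
elim: k => // k IHk; rewrite ltnS leq_eqVlt /= nth_rcons size_min_bad_prefix.
by case/orP=> [/eqP->|lt_ik]; rewrite ?ltnn ?eqxx // lt_ik IHk.
Qed.

Hypothesis bad_exists : exists f, bad f.

Lemma bad_extension_min_bad_prefix k : bad_extension (min_bad_prefix k).
Proof.
elim: k => [|k IHk]; first by have [f bad_f] := bad_exists; exists f.
by have [] := next_min_badP IHk.
Qed.

Lemma min_bad_bad : bad min_bad.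
Proof.
move=> i j lt_ij; have [f bad_f f_p] := bad_extension_min_bad_prefix j.+1.
have lt_j : j < j.+1 := ltnSn j; have lt_i : i < j.+1 := ltnW lt_ij.
rewrite -(nth_min_bad_prefix lt_i) -(nth_min_bad_prefix lt_j).
by rewrite -!f_p ?size_min_bad_prefix ?bad_f.
Qed.

Lemma min_bad_shortest k w :
  bad_extension (rcons (min_bad_prefix k) w) -> size (min_bad k) <= size w.
Proof. by have [_] := next_min_badP (bad_extension_min_bad_prefix k); apply. Qed.

End Higman.

(* Nash-Williams' minimal bad sequence argument. *)
Lemma higman (T : finType) (f : nat -> seq T) :
  exists i j, i < j /\ subseq (f i) (f j).
Proof.
apply: NNPP => no_good.
have bad_exists : exists f : nat -> seq T, bad f.
  by exists f => i j lt_ij; apply/negP => sub; apply: no_good; exists i, j.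
pose m := min_bad T; have bad_m : bad m := min_bad_bad bad_exists.
have m_nil k : m k != [::].
  by apply: contraTneq (bad_m k k.+1 (ltnSn k)) => ->; rewrite sub0seq.
have [x0 _] : exists x0 : T, true.
  by case E: (m 0) (m_nil 0) => [|x0 u] //; exists x0.
pose hd k := head x0 (m k); pose tl k := behead (m k).
have m_E k : m k = hd k :: tl k by move: (m_nil k); rewrite /hd /tl; case: (m k).
have [a [phi [phi_mono phi_hd]]] := finite_colouring_monochromatic hd.
pose s := phi 0.
have phi_ge p : s <= phi p := ltnW_homo phi_mono (leq0n p).
(* Shortening the heads of the subsequence m \o phi keeps the sequence bad. *)
pose h i := if i < s then m i else tl (phi (i - s)).
have bad_h : bad h.
  move=> i j lt_ij; rewrite /h; case: ltnP => [lt_is|le_si].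
    case: ltnP => [_|le_sj]; first exact: bad_m.
    apply: contraNN (bad_m i (phi (j - s)) (leq_trans lt_is (phi_ge _))).
    by move/subseq_trans; apply; rewrite m_E subseq_cons.
  rewrite ltnNge (ltnW (leq_ltn_trans le_si lt_ij)) /=.
  have lt_ij_s : i - s < j - s by rewrite ltn_sub2r // (leq_ltn_trans le_si).
  by have := bad_m _ _ (phi_mono _ _ lt_ij_s); rewrite !m_E !phi_hd /= eqxx.
suff : size (m s) <= size (tl s) by rewrite m_E ltnn.
apply: min_bad_shortest; exists h => // i.
rewrite size_rcons size_min_bad_prefix ltnS nth_rcons size_min_bad_prefix.
rewrite /h leq_eqVlt => /orP[/eqP->|lt_is]; first by rewrite ltnn eqxx subnn.
by rewrite lt_is nth_min_bad_prefix.
Qed.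

Lemma subseq_map_sorted_embedding (A : eqType) (F G : nat -> A) (s t : seq nat) :
  sorted ltn s -> sorted ltn t -> subseq (map F s) (map G t) ->
  exists f : nat -> nat,
    {in s, forall x, f x \in t /\ G (f x) = F x} /\ {in s &, {homo f : x y / x < y}}.
Proof.
elim: t s => [|b t IHt] [|a s] //= sorted_s sorted_t; try by exists id.
move: sorted_s sorted_t; rewrite !(path_sortedE ltn_trans).
move=> /andP[/allP a_lt_s sorted_s] /andP[/allP b_lt_t sorted_t].
case: eqP => [FaGb | _] sub; last first.
  have [|f [f_map f_mono]] := IHt (a :: s) _ sorted_t sub.
    by rewrite /= (path_sortedE ltn_trans) sorted_s andbT; apply/allP.
  by exists f; split=> // x /f_map[f_x ->]; rewrite inE f_x orbT.
have [f [f_map f_mono]] := IHt s sorted_s sorted_t sub.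
have a_notin_s : a \notin s by apply/negP => /a_lt_s; rewrite ltnn.
have ne_a x : x \in s -> (x == a) = false.
  by move=> x_s; apply/negbTE; apply: contraNneq a_notin_s => <-.
exists (fun x => if x == a then b else f x); split.
  move=> x /predU1P[->|x_s]; first by rewrite eqxx mem_head.
  by rewrite ne_a //; have [f_x ->] := f_map x x_s; rewrite inE f_x orbT.
move=> x y /predU1P[->|x_s] /predU1P[->|y_s]; rewrite ?eqxx ?ltnn ?ne_a //.
- by move=> _; apply: b_lt_t; have [] := f_map y y_s.
- by move=> lt_xa; move: (ltn_trans lt_xa (a_lt_s x x_s)); rewrite ltnn.
- exact: f_mono.
Qed.

Definition rl_support (S : readingList) : seq nat :=
  sort leq (undup (flatten (rl_sets S))).

Definition rl_column (B : nat) (S : readingList) (x : nat) : {ffun 'I_B -> bool} :=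
  [ffun k : 'I_B => x \in nth [::] (rl_sets S) k].

Definition rl_code (B : nat) (S : readingList) : seq ('I_B.+1 + {ffun 'I_B -> bool}) :=
  inl (inord (rl_n S)) :: map (fun x => inr (rl_column B S x)) (rl_support S).

Lemma sorted_rl_support S : sorted ltn (rl_support S).
Proof.
rewrite ltn_sorted_uniq_leq sort_uniq undup_uniq.
exact: (sort_sorted leq_total).
Qed.

Lemma mem_rl_support S k x : x \in nth [::] (rl_sets S) k -> x \in rl_support S.
Proof.
move=> x_Sk; rewrite mem_sort mem_undup; apply/flattenP.
exists (nth [::] (rl_sets S) k) => //; apply: mem_nth.
by rewrite ltnNge; apply: contraTN x_Sk => /(nth_default [::])->.
Qed.

Lemma rl_le_of_subseq_code B S T : rl_n S <= B -> rl_n T <= B ->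
  subseq (rl_code B S) (rl_code B T) -> rl_le S T.
Proof.
move=> le_SB le_TB; rewrite /rl_code /=.
case: eqP => [[/(congr1 val)] | _ /mem_subseq/(_ _ (mem_head _ _))/mapP[]//].
rewrite /= !inordK ?ltnS // => eq_n sub.
have [f [f_map f_mono]] :=
  subseq_map_sorted_embedding (sorted_rl_support S) (sorted_rl_support T) sub.
exists id, (fun _ => f); split; first by move=> k; rewrite -eq_n.
split; first by move=> ? ? /andP[].
split; last first.
  by split=> // k x y _ /mem_rl_support x_S /mem_rl_support y_S; apply: f_mono.
move=> k x lt_kn x_Sk; have [_ [col_fx]] := f_map x (mem_rl_support x_Sk).
have lt_kB : k < B := leq_trans lt_kn le_SB.
have := congr1 (fun c : {ffun 'I_B -> bool} => c (Ordinal lt_kB)) col_fx.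
by rewrite !ffunE /= x_Sk.
Qed.

Theorem mainTheorem5 (M : nat) :
  ~ (exists S : nat -> readingList,
        rl_antichain M S /\ exists B : nat, forall i, rl_n (S i) <= B).
Proof.
move=> [S [[_ antichain] [B le_nB]]].
have [i [j [lt_ij sub]]] := higman (fun i => rl_code B (S i)).
apply: (antichain i j); first by move=> eq_ij; rewrite eq_ij ltnn in lt_ij.
exact: rl_le_of_subseq_code sub.
Qed.
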